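(* Let $w=(w(m))_{m\in2\mathbb{Z}}\in\ell^2(2\mathbb{Z})$ and $r(m)=\max(|w(m)|,|w(-m)|)$, $m\in2\mathbb{Z}$. For $n\in\mathbb{N}$, $s\ge2$ and $m\in n+2\mathbb{Z}$ define $$\sigma_2(n,s;m)=\sum_{j_1,\dots,j_s\neq\pm n}r(m+j_1)\,\frac{r(j_1+j_2)}{|n+j_2|}\cdots\frac{r(j_{s-2}+j_{s-1})}{|n+j_{s-1}|}\cdot\frac{r(j_{s-1}+j_s)}{|n^2-j_s^2|}$$ (for $s=2$ this is $\sum_{j_1,j_2\neq\pm n}r(m+j_1)\frac{r(j_1+j_2)}{|n^2-j_2^2|}$), where $j_1,\dots,j_s$ range over $n+2\mathbb{Z}\setminus\{n,-n\}$, and for $s\in\mathbb{N}$, $k\in n+2\mathbb{Z}$, $$\sigma_1(n,s;k)=\sum_{j_1,\dots,j_s\neq n}\frac{r(k+j_1)}{|n-j_1|}\cdot\frac{r(j_1+j_2)}{|n-j_2|}\cdots\frac{r(j_{s-1}+j_s)}{|n-j_s|}$$ with indices in $n+2\mathbb{Z}\setminus\{n\}$. Then $$\sigma_2(n,2;m)\le\|r\|^2\cdot\frac{2\log 6n}{n},$$ and for $s\ge3$, $$\sigma_2(n,s;m)\le\|r\|^2\cdot\frac{2\log 6n}{n}\cdot\sup_k\sigma_1(n,s-2;k).$$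
   Context: $\|r\|$ denotes the $\ell^2(2\mathbb{Z})$ norm of $r$; note $r(-m)=r(m)\ge0$. *)

From HB Require Import structures.
From mathcomp Require Import all_boot all_order all_algebra.
From mathcomp Require Import all_classical all_reals.
From mathcomp Require Import ereal topology normedtype sequences esum exp.
Set Implicit Arguments. Unset Strict Implicit. Unset Printing Implicit Defensive.
Import Order.TTheory GRing.Theory Num.Theory.
Local Open Scope classical_set_scope.
Local Open Scope ring_scope.

Section defs.
Variable R : realType.

Definition evens : set int := [set m | (2 %| m)%Z].
Definition coset2 (n : nat) : set int := [set j | (2 %| j - n%:Z)%Z].

Definition rfun (w : int -> R) (m : int) : R := Num.max `|w m| `|w (- m)|.

Definition l2norm2 (f : int -> R) : \bar R := \esum_(m in evens) ((f m) ^+ 2)%:E.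

(* sigma_2(n,s;m): tuple t = (j_1,...,j_s), t_i = j_{i+1} *)
Definition sigma2_term (w : int -> R) (n s : nat) (m : int) (t : s.-tuple int) : R :=
  let r := rfun w in
  let j := fun i => nth 0%Z t i in
  r (m + j 0%N)
  * (\prod_(0 <= i < s - 2) (r (j i + j i.+1) / `|(n%:Z + j i.+1)%:~R|))
  * (r (j (s - 2)%N + j (s - 1)%N)
       / `|((n%:Z) ^+ 2 - (j (s - 1)%N) ^+ 2)%:~R|).

Definition sigma2 (w : int -> R) (n s : nat) (m : int) : \bar R :=
  \esum_(t in [set t : s.-tuple int |
              forall i, (i < s)%N -> coset2 n (nth 0%Z t i)
                        /\ nth 0%Z t i <> n%:Z /\ nth 0%Z t i <> - n%:Z])
     (sigma2_term w n m t)%:E.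

Definition sigma1_term (w : int -> R) (n s : nat) (k : int) (t : s.-tuple int) : R :=
  let r := rfun w in
  let j := fun i => nth 0%Z t i in
  (r (k + j 0%N) / `|(n%:Z - j 0%N)%:~R|)
  * \prod_(0 <= i < s - 1) (r (j i + j i.+1) / `|(n%:Z - j i.+1)%:~R|).

Definition sigma1 (w : int -> R) (n s : nat) (k : int) : \bar R :=
  \esum_(t in [set t : s.-tuple int |
              forall i, (i < s)%N -> coset2 n (nth 0%Z t i) /\ nth 0%Z t i <> n%:Z])
     (sigma1_term w n k t)%:E.

End defs.

From HB Require Import structures.
From mathcomp Require Import all_boot all_order all_algebra finmap.
From mathcomp Require Import all_classical all_reals.
From mathcomp Require Import ereal topology normedtype sequences esum exp.
From mathcomp Require Import ring lra zify.
Set Implicit Arguments. Unset Strict Implicit. Unset Printing Implicit Defensive.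
Import Order.TTheory GRing.Theory Num.Theory.
Local Open Scope classical_set_scope.
Local Open Scope ring_scope.

(* All sums are first cut down to a finite set [L] of admissible indices.  Put
   [R_L f a = \sum_(b <- L) r (a + b) * f b] and [T = R_L D] for the weight
   [D b = |n + b|^-1].  The finite part of sigma_2(n,s;m) is
   [<r (m + .), T^(s-2) (R_L E)>] with [E b = |n^2 - b^2|^-1]; as the kernel
   [r (a + b)] is symmetric, [T^(s-2) R_L] is self-adjoint, so this is
   [<T^(s-2) (R_L r (m + .)), E>].  By AM-GM, [R_L r (m + .) <= ||r||^2] on [L];
   positivity carries this bound through [T^(s-2)], and [T^(s-2) 1 a] is, after
   [b |-> -b], a finite part of sigma_1(n, s-2; -a).  Finally [|n^2 - b^2|] is
   [4 |q| |n + q|] for [b = n + 2q], and partial fractions bound [\sum E] by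
   [H_n / n <= 2 log (6n) / n].  Everything lives in the extended reals. *)

Lemma uniq_sub_ler_sum (R : numDomainType) (T : eqType) (s1 s2 : seq T)
    (F : T -> R) :
  uniq s1 -> {subset s1 <= s2} -> (forall x, 0 <= F x) ->
  \sum_(x <- s1) F x <= \sum_(x <- s2) F x.
Proof.
elim: s1 s2 => [|x s1 IH] s2 /=; first by move=> _ _ F0; rewrite big_nil sumr_ge0.
case/andP => xs1 us1 sub F0.
have x2 : x \in s2 by apply: sub; rewrite mem_head.
rewrite big_cons (big_rem x x2) /= lerD2l; apply: IH => // y ys1.
apply: rem_mem; last by apply: sub; rewrite inE ys1 orbT.
by apply: contraNneq xs1 => <-.
Qed.

Lemma sum_mul_le_sup (R : realType) (T : eqType) (L : seq T) (E X : T -> R)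
    (c : R) (S : \bar R) :
  0 < c -> (forall d, 0 <= E d) -> \sum_(d <- L) E d <= c ->
  {in L, forall d, ((X d)%:E <= S)%E} -> (0 <= S)%E ->
  ((\sum_(d <- L) E d * X d)%:E <= c%:E * S)%E.
Proof.
move=> c0 E0 EL XS S0; case: S XS S0 => [s| |] // XS S0; last first.
  by rewrite gt0_muley ?lte_fin ?leey.
rewrite -EFinM lee_fin; apply: le_trans (_ : \sum_(d <- L) E d * s <= _).
  rewrite big_seq [leRHS]big_seq; apply: ler_sum => d dL.
  by rewrite ler_wpM2l // -lee_fin XS.
by rewrite -mulr_suml ler_wpM2r // -lee_fin.
Qed.

Fixpoint tuples {T : Type} (p : nat) (L : seq T) : seq (seq T) :=
  if p is p'.+1 then [seq a :: t | a <- L, t <- tuples p' L] else [:: [::]].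

Lemma tuplesS (T : Type) p (L : seq T) :
  tuples p.+1 L = [seq a :: t | a <- L, t <- tuples p L].
Proof. by []. Qed.

Lemma mem_tuples (T : eqType) p (L : seq T) l :
  (l \in tuples p L) = (size l == p) && all (mem L) l.
Proof.
elim: p l => [|p IH] [|a l] //=; first by apply/allpairsP => -[[? ?] []].
rewrite eqSS; apply/allpairsP/and3P => [[[b t] /= [bL + [-> ->]]]|[/eqP sz aL lL]].
  by rewrite IH => /andP[/eqP -> ->].
by exists (a, l); rewrite IH sz eqxx lL.
Qed.

Lemma tuples_uniq (T : eqType) p (L : seq T) : uniq L -> uniq (tuples p L).
Proof.
move=> uL; elim: p => [|p IH] //=.
by apply: allpairs_uniq => // [[a t]] [b u] _ _ /= [-> ->].
Qed.

Lemma tuples_map (T U : Type) (f : T -> U) p L :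
  tuples p (map f L) = map (map f) (tuples p L).
Proof. by elim: p => [|p IH] //=; rewrite IH allpairs_mapl allpairs_mapr map_allpairs. Qed.

Section Kernel.
Variables (R : realType) (w : int -> R).
Local Notation r := (rfun w).

Lemma rfun_ge0 x : 0 <= r x.
Proof. by rewrite /rfun le_max normr_ge0. Qed.

Lemma rfunN x : r (- x) = r x.
Proof. by rewrite /rfun opprK maxC. Qed.

Definition rker (L : seq int) (f : int -> R) (a : int) : R :=
  \sum_(b <- L) r (a + b) * f b.

Definition rkerw (L : seq int) (D f : int -> R) : int -> R :=
  rker L (fun b => D b * f b).

Lemma rker_sym L f g :
  \sum_(a <- L) f a * rker L g a = \sum_(a <- L) rker L f a * g a.
Proof.
under eq_bigr do rewrite /rker big_distrr.
rewrite exchange_big; apply: eq_bigr => b _; rewrite /rker big_distrl.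
by apply: eq_bigr => a _ /=; rewrite addrC mulrCA mulrA.
Qed.

Lemma iter_rkerw_sym L D k f g :
  \sum_(a <- L) f a * iter k (rkerw L D) (rker L g) a
  = \sum_(a <- L) iter k (rkerw L D) (rker L f) a * g a.
Proof.
elim: k f => [|k IH] f; first exact: rker_sym.
rewrite iterS iterSr -IH /rkerw rker_sym.
by apply: eq_bigr => a _; rewrite mulrCA mulrA.
Qed.

Lemma iter_rkerw_le L D k f g c : (forall b, 0 <= D b) ->
  {in L, forall b, f b <= c * g b} ->
  {in L, forall a, iter k (rkerw L D) f a <= c * iter k (rkerw L D) g a}.
Proof.
move=> D0 fg; elim: k => [|k IH] a aL /=; first exact: fg.
rewrite /rkerw /rker mulr_sumr big_seq [leRHS]big_seq; apply: ler_sum => b bL.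
by rewrite [c * _]mulrCA [c * _]mulrCA ler_wpM2l ?rfun_ge0 // ler_wpM2l ?IH.
Qed.

Lemma iter_rkerw_ge0 L D k f a : (forall b, 0 <= D b) -> (forall b, 0 <= f b) ->
  0 <= iter k (rkerw L D) f a.
Proof.
move=> D0 f0; elim: k a => [|k IH] a //=.
by rewrite sumr_ge0 // => b _; rewrite !mulr_ge0 ?rfun_ge0.
Qed.

Lemma iter_rkerw1 L D k :
  iter k.+1 (rkerw L D) (fun=> 1) = iter k (rkerw L D) (rker L D).
Proof.
by rewrite iterSr; congr iter; apply/funext => a; apply: eq_bigr => b _; rewrite mulr1.
Qed.

(* [walk D g a [:: b_1; ...; b_k]] is
   [r (a + b_1) * D b_1 * r (b_1 + b_2) * ... * D b_(k-1) * r (b_(k-1) + b_k) * g b_k];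
   it is the summand of sigma_1 for [D = g = inv_nB], and that of sigma_2 without
   its first factor for [D = inv_nD], [g = inv_n2B]. *)
Fixpoint walk (D g : int -> R) (a : int) (l : seq int) : R :=
  if l is b :: l' then
    r (a + b) * (if l' is [::] then g b else D b * walk D g b l')
  else 1.

Lemma walk_ge0 D g a l : (forall b, 0 <= D b) -> (forall b, 0 <= g b) ->
  0 <= walk D g a l.
Proof.
move=> D0 g0; elim: l a => [|b l IH] a /=; first exact: ler01.
rewrite mulr_ge0 ?rfun_ge0 //; case: l IH => [|c l] IH; first exact: g0.
exact: mulr_ge0 (D0 b) (IH b).
Qed.

Lemma walk_opp D g a l :
  walk (fun b => D (- b)) (fun b => g (- b)) (- a) (map -%R l) = walk D g a l.
Proof.
elim: l a => [|b l IH] a //=; rewrite -opprD rfunN opprK.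
by case: l IH => [|c l] IH; rewrite ?opprK // -IH.
Qed.

Lemma sum_walk L D g p a :
  \sum_(l <- tuples p.+1 L) walk D g a l = iter p (rkerw L D) (rker L g) a.
Proof.
elim: p a => [|p IH] a; rewrite tuplesS big_allpairs_dep.
  by apply: eq_bigr => b _; rewrite big_seq1.
rewrite iterS /rkerw /rker; apply: eq_bigr => b _.
rewrite -IH !mulr_sumr !big_seq; apply: eq_bigr => l.
by rewrite mem_tuples; case: l.
Qed.

End Kernel.

Section Weights.
Variables (R : realType) (n : nat).

Definition inv_nD (b : int) : R := `|(n%:Z + b)%:~R|^-1.
Definition inv_nB (b : int) : R := `|(n%:Z - b)%:~R|^-1.
Definition inv_n2B (b : int) : R := `|(n%:Z ^+ 2 - b ^+ 2)%:~R|^-1.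

Lemma inv_nD_ge0 b : 0 <= inv_nD b. Proof. by rewrite invr_ge0. Qed.
Lemma inv_nB_ge0 b : 0 <= inv_nB b. Proof. by rewrite invr_ge0. Qed.
Lemma inv_n2B_ge0 b : 0 <= inv_n2B b. Proof. by rewrite invr_ge0. Qed.

Lemma inv_n2BN b : inv_n2B (- b) = inv_n2B b.
Proof. by rewrite /inv_n2B sqrrN. Qed.

Lemma inv_n2B_natE b : inv_n2B b = (`|n%:Z ^+ 2 - b ^+ 2|%N)%:R^-1.
Proof. by rewrite /inv_n2B natr_absz intr_norm. Qed.

Definition sigma2_index (b : int) : bool :=
  [&& (2 %| b - n%:Z)%Z, b != n%:Z & b != - n%:Z].

Lemma sigma2_index_coset2 b : sigma2_index b -> coset2 n b.
Proof. by case/and3P. Qed.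

Lemma sigma2_index_coset2N b : sigma2_index b -> coset2 n (- b).
Proof. by case/and3P => /dvdzP[q hq] _ _; apply/dvdzP; exists (- q - n%:Z); lia. Qed.

End Weights.

Section Terms.
Variables (R : realType) (w : int -> R) (n : nat).
Local Notation r := (rfun w).
Local Notation walk := (walk w).

Lemma sigma1_termE p k (t : p.+1.-tuple int) :
  sigma1_term w n k t = walk (inv_nB R n) (inv_nB R n) k t.
Proof.
rewrite /sigma1_term /= subn1; case: t => l /= /eqP sz.
elim: p k l sz => [|p IH] k [|b l] //= [sz].
  by case: l sz => // _; rewrite big_geq // mulr1.
by rewrite big_nat_recl //= -(IH b l) //; case: l sz => // c l _; rewrite !mulrA.
Qed.

Lemma sigma2_termE m p (t : p.+2.-tuple int) :
  sigma2_term w n m t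
  = r (m + head 0 t) * walk (inv_nD R n) (inv_n2B R n) (head 0 t) (behead t).
Proof.
rewrite /sigma2_term /= !subSS !subn0 -mulrA; case: t => [[|a l] //= /eqP[sz]].
congr (_ * _); elim: p a l sz => [|p IH] a [|b l] //= [sz].
  by case: l sz => // _; rewrite big_geq // mul1r.
rewrite big_nat_recl //= -mulrA; case: l sz => // c l sz.
by rewrite -(IH b (c :: l)) // !mulrA.
Qed.

End Terms.

Section Harmonic.
Variable R : realType.

Definition harm (k : nat) : R := \sum_(1 <= l < k.+1) l%:R^-1.

Lemma harmS k : harm k.+1 = harm k + k.+1%:R^-1.
Proof. by rewrite /harm big_nat_recr. Qed.

Lemma harmD k j : harm (k + j) = harm k + \sum_(1 <= l < j.+1) (k + l)%:R^-1.
Proof.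
elim: j => [|j IH]; first by rewrite addn0 big_geq ?addr0.
by rewrite addnS harmS IH [in RHS]big_nat_recr //= addrA addnS.
Qed.

Lemma harm_le_addn k j : harm k <= harm (k + j).
Proof. by rewrite harmD lerDl sumr_ge0 // => l _; rewrite invr_ge0. Qed.

Lemma harm_le_1Dln k : harm k.+1 <= 1 + ln k.+1%:R.
Proof.
elim: k => [|k IH]; first by rewrite /harm big_nat1 invr1 ln1 addr0.
have k1 : (0 : R) < k.+1%:R by rewrite ltr0n.
have k2 : (0 : R) < k.+2%:R by rewrite ltr0n.
rewrite harmS; set a := k.+2%:R^-1.
have ratio : 1 + - a = k.+1%:R / k.+2%:R by rewrite /a; field; rewrite gt_eqF.
have := @le_ln1Dx R (- a).
rewrite ltrN2 invf_lt1 ?ltr1n // ratio ln_div ?posrE // => /(_ isT); lra.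
Qed.

Lemma le_1Dln_2ln6n n : (0 < n)%N -> 1 + ln n%:R <= 2 * ln (6 * n%:R) :> R.
Proof.
move=> n0; have n1 : (1 : R) <= n%:R by rewrite ler1n.
have ln6 : - ln 6 <= - (5 / 6) :> R.
  have e : 6^-1 = 1 + - (5 / 6) :> R by field.
  by rewrite -lnV ?posrE // [in ln _]e; apply: le_ln1Dx; lra.
rewrite lnM ?posrE ?(lt_le_trans ltr01 n1) //; have := ln_ge0 n1; lra.
Qed.

Lemma sum_inv_mulD_le n M : (0 < n)%N ->
  \sum_(1 <= l < M.+1) (l * (n + l))%:R^-1 <= harm n / n%:R :> R.
Proof.
move=> n0; have nR : (n%:R : R) != 0 by rewrite pnatr_eq0 -lt0n.
have partial l : (1 <= l)%N ->
    (l * (n + l))%:R^-1 = n%:R^-1 * (l%:R^-1 - (n + l)%:R^-1) :> R.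
  move=> l1; rewrite natrM natrD; field.
  by rewrite nR -natrD !pnatr_eq0 -!lt0n addn_gt0 n0 l1.
rewrite big_nat (eq_bigr (fun l => n%:R^-1 * (l%:R^-1 - (n + l)%:R^-1))); last first.
  by move=> l /andP[l1 _]; apply: partial.
rewrite -big_nat -mulr_sumr sumrB -/(harm M).
have -> : \sum_(1 <= l < M.+1) (n + l)%:R^-1 = harm (n + M) - harm n :> R.
  by rewrite harmD addrC addKr.
rewrite mulrC ler_wpM2r ?invr_ge0 //; have := harm_le_addn M n; rewrite addnC; lra.
Qed.

Lemma sum_inv_mulB_le n : (0 < n)%N ->
  \sum_(1 <= l < n) (l * (n - l))%:R^-1 <= 2 * harm n / n%:R :> R.
Proof.
case: n => // n _; have nR : (n.+1%:R : R) != 0 by rewrite pnatr_eq0.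
have partial l : (1 <= l <= n)%N ->
    (l * (n.+1 - l))%:R^-1 = n.+1%:R^-1 * (l%:R^-1 + (n.+1 - l)%:R^-1) :> R.
  case/andP => l1 ln; have -> : n.+1 = (l + (n.+1 - l))%N by rewrite subnKC // ltnW.
  rewrite addKn natrM natrD; field.
  by rewrite -natrD !pnatr_eq0 -!lt0n addn_gt0 l1 subn_gt0 ltnS ln.
rewrite big_nat (eq_bigr _ partial) -big_nat -mulr_sumr big_split /=.
have -> : \sum_(1 <= l < n.+1) (n.+1 - l)%:R^-1 = harm n :> R.
  by rewrite big_nat_rev /=; apply: eq_big_nat => l /andP[l1 ln]; congr (_%:R^-1); lia.
rewrite -/(harm n) mulrC ler_wpM2r ?invr_ge0 //.
by have := harm_le_addn n 1; rewrite addn1; lra.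
Qed.

End Harmonic.

Section Windows.
Variables (R : realType) (n : nat).

(* With [b = n + 2q], [sigma2_index n b] means [q <> 0, -n]; then [b] is
   [n + 2l] ([q = l > 0]), [- (n + 2l)] ([q = - n - l < - n])
   or [n - 2l] ([q = - l], [0 < l < n]). *)
Definition outer_window (M : nat) : seq int :=
  [seq (n + 2 * l)%N%:Z | l <- index_iota 1 M.+1].
Definition inner_window : seq int := [seq n%:Z - (2 * l)%N%:Z | l <- index_iota 1 n].

Lemma sigma2_index_window b M : sigma2_index n b -> (`|b| <= M)%N ->
  b \in outer_window M ++ map -%R (outer_window M) ++ inner_window.
Proof.
case/and3P => /dvdzP[q hq] bn bNn bM; rewrite !mem_cat.
have [q0|q0] := ltrP 0 q.
  by apply/orP; left; apply/mapP; exists `|q|%N; rewrite ?mem_index_iota; lia.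
have [qn|qn] := ltrP q (- n%:Z).
  apply/orP; right; apply/orP; left; rewrite -map_comp.
  by apply/mapP; exists (absz (q + n%:Z)); rewrite ?mem_index_iota /=; lia.
have q_neq0 : q != 0 by apply: contra bn => /eqP q0'; apply/eqP; lia.
have q_neqN : q != - n%:Z by apply: contra bNn => /eqP q0'; apply/eqP; lia.
apply/orP; right; apply/orP; right.
by apply/mapP; exists `|q|%N; rewrite ?mem_index_iota; lia.
Qed.

Lemma sum_inv_n2B_outer M :
  \sum_(b <- outer_window M) inv_n2B R n b
  = 4^-1 * \sum_(1 <= l < M.+1) (l * (n + l))%:R^-1.
Proof.
rewrite big_map mulr_sumr; apply: eq_big_nat => l /andP[l1 _].
by rewrite inv_n2B_natE (_ : absz _ = 4 * (l * (n + l)))%N ?natrM ?invfM //; lia.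
Qed.

Lemma sum_inv_n2B_inner :
  \sum_(b <- inner_window) inv_n2B R n b = 4^-1 * \sum_(1 <= l < n) (l * (n - l))%:R^-1.
Proof.
rewrite big_map mulr_sumr; apply: eq_big_nat => l /andP[l1 ln].
by rewrite inv_n2B_natE (_ : absz _ = 4 * (l * (n - l)))%N ?natrM ?invfM //; nia.
Qed.

Lemma sum_inv_n2B_le L : (0 < n)%N -> uniq L -> all (sigma2_index n) L ->
  \sum_(b <- L) inv_n2B R n b <= 2 * ln (6 * n%:R) / n%:R.
Proof.
move=> n0 uL /allP idxL; set M := (\sum_(b <- L) `|b|)%N.
have sub : {subset L <= outer_window M ++ map -%R (outer_window M) ++ inner_window}.
  move=> b bL; apply: sigma2_index_window; first exact: idxL.
  by rewrite /M (big_rem b bL) leq_addr.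
apply: le_trans (uniq_sub_ler_sum uL sub (@inv_n2B_ge0 R n)) _.
rewrite !big_cat /= [X in _ + (X + _)]big_map.
under [X in _ + (X + _)]eq_bigr do rewrite inv_n2BN.
rewrite sum_inv_n2B_outer sum_inv_n2B_inner.
have := sum_inv_mulD_le R M n0; have := sum_inv_mulB_le R n0.
have harm_le : harm R n / n%:R <= 2 * ln (6 * n%:R) / n%:R.
  rewrite ler_wpM2r ?invr_ge0 //; apply: le_trans (le_1Dln_2ln6n R n0).
  by rewrite -(prednK n0) harm_le_1Dln.
lra.
Qed.

End Windows.

Section Sigma1.
Variables (R : realType) (w : int -> R) (n : nat).

Lemma iter_rkerw1_le_sigma1 L q a : uniq L -> all (sigma2_index n) L ->
  ((iter q.+1 (rkerw w L (inv_nD R n)) (fun=> 1) a)%:E <= sigma1 w n q.+1 (- a))%E.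
Proof.
move=> uL /allP idxL; rewrite iter_rkerw1 -sum_walk.
(* [inv_nD (- b)] and [inv_nB b] are convertible. *)
under eq_bigr do rewrite -walk_opp.
rewrite -(big_map (map -%R) xpredT (walk w (inv_nB R n) (inv_nB R n) (- a))).
rewrite -tuples_map; set L' := map -%R L.
pose ts : seq (q.+1.-tuple int) := pmap insub (tuples q.+1 L').
have val_ts : map val ts = tuples q.+1 L'.
  rewrite pmap_filter; last exact: insubK.
  by apply/all_filterP/allP => l; rewrite mem_tuples isSome_insub => /andP[].
apply: esum_ge; exists [set` ts].
  split=> [|t /=]; first exact: finite_seq.
  rewrite mem_pmap_sub mem_tuples => /andP[_ /allP tL'] i ip.
  have /mapP[b bL ->] : nth 0%Z t i \in L' by apply: tL'; rewrite mem_nth ?size_tuple.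
  split; first exact: sigma2_index_coset2N (idxL b bL).
  by case/and3P: (idxL b bL) => _ _ bNn; apply/eqP; rewrite eqr_oppLR.
rewrite -fsbig_seq ?pmap_sub_uniq ?tuples_uniq ?map_inj_uniq //.
by rewrite sumEFin lee_fin -val_ts big_map; under [leRHS]eq_bigr do rewrite sigma1_termE.
Qed.

Lemma sigma1_sup_ge0 q : (0 <= ereal_sup [set sigma1 w n q.+1 k | k in coset2 n])%E.
Proof.
have Sn : [set sigma1 w n q.+1 k | k in coset2 n] (sigma1 w n q.+1 n%:Z).
  by exists n%:Z => //; rewrite /coset2 /= subrr dvdz0.
apply: le_trans (ereal_sup_ubound Sn); apply: esum_ge0 => t _.
by rewrite lee_fin sigma1_termE walk_ge0 //; exact: inv_nB_ge0.
Qed.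

Lemma iter_rkerw1_le_sup L q : uniq L -> all (sigma2_index n) L ->
  {in L, forall a, ((iter q.+1 (rkerw w L (inv_nD R n)) (fun=> 1) a)%:E
                    <= ereal_sup [set sigma1 w n q.+1 k | k in coset2 n])%E}.
Proof.
move=> uL idxL a aL; apply: le_trans (iter_rkerw1_le_sigma1 q a uL idxL) _.
apply: ereal_sup_ubound; exists (- a); rewrite ?opprK //.
exact: sigma2_index_coset2N (allP idxL a aL).
Qed.

End Sigma1.

Section Sigma2.
Variables (R : realType) (w : int -> R) (n : nat) (m : int).
Local Notation r := (rfun w).

Definition pair_sums (L : seq int) : seq int :=
  undup ([seq m + j | j <- L] ++ [seq i + j | i <- L, j <- L]).

Definition sqsum (L : seq int) : R := \sum_(e <- pair_sums L) r e ^+ 2.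

Lemma sqsum_ge0 L : 0 <= sqsum L.
Proof. by rewrite sumr_ge0 // => e _; rewrite sqr_ge0. Qed.

Lemma sqsum_le_l2norm2 L : coset2 n m -> all (sigma2_index n) L ->
  ((sqsum L)%:E <= l2norm2 (rfun w))%E.
Proof.
move=> /dvdzP[qm hqm] /allP idxL.
have cL b : b \in L -> coset2 n b by move/idxL/sigma2_index_coset2.
apply: esum_ge; exists [set` pair_sums L].
  split=> [|e /=]; first exact: finite_seq.
  rewrite mem_undup mem_cat => /orP[/mapP[j jL ->]|/allpairsP[[i j] [iL jL ->]]] /=.
    by have /dvdzP[q hq] := cL j jL; apply/dvdzP; exists (q + qm + n%:Z); lia.
  have /dvdzP[q hq] := cL j jL; have /dvdzP[q' hq'] := cL i iL.
  by apply/dvdzP; exists (q + q' + n%:Z); lia.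
by rewrite -fsbig_seq ?undup_uniq // sumEFin.
Qed.

Lemma rker_le_sqsum L : uniq L ->
  {in L, forall b, rker w L (fun a => r (m + a)) b <= sqsum L}.
Proof.
move=> uL b bL; rewrite /rker.
have sq_le c : {in L, forall a, c + a \in pair_sums L} ->
    \sum_(a <- L) r (c + a) ^+ 2 <= sqsum L.
  move=> cL; rewrite -(big_map (fun a => c + a) xpredT (fun e => r e ^+ 2)).
  apply: uniq_sub_ler_sum => [|_ /mapP[a aL ->]|e]; last exact: sqr_ge0.
    by rewrite map_inj_uniq // => x y /addrI.
  exact: cL.
have hb : \sum_(a <- L) r (b + a) ^+ 2 <= sqsum L.
  apply: sq_le => a aL; rewrite mem_undup mem_cat; apply/orP; right.
  exact: (allpairs_f (fun i j => i + j)).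
have hm : \sum_(a <- L) r (m + a) ^+ 2 <= sqsum L.
  by apply: sq_le => a aL; rewrite mem_undup mem_cat map_f.
apply: le_trans (_ : \sum_(a <- L) (r (b + a) ^+ 2 + r (m + a) ^+ 2) / 2 <= _).
  by apply: ler_sum => a _; have := sqr_ge0 (r (b + a) - r (m + a)); nra.
by rewrite -mulr_suml big_split /=; lra.
Qed.

Lemma sum_iter_le_sqsum L p : uniq L ->
  \sum_(a <- L) r (m + a) * iter p (rkerw w L (inv_nD R n)) (rker w L (inv_n2B R n)) a
  <= sqsum L * \sum_(a <- L) inv_n2B R n a * iter p (rkerw w L (inv_nD R n)) (fun=> 1) a.
Proof.
move=> uL; rewrite iter_rkerw_sym mulr_sumr big_seq [leRHS]big_seq.
apply: ler_sum => a aL; rewrite mulrC mulrCA ler_wpM2l ?inv_n2B_ge0 //.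
apply: (iter_rkerw_le w p _ _ aL) => [|b bL]; first exact: inv_nD_ge0.
by rewrite mulr1 rker_le_sqsum.
Qed.

Lemma sigma2_fsets_le p (X : set (p.+2.-tuple int)) :
  fsets [set t : p.+2.-tuple int |
         forall i, (i < p.+2)%N -> coset2 n (nth 0%Z t i)
                   /\ nth 0%Z t i <> n%:Z /\ nth 0%Z t i <> - n%:Z] X ->
  exists2 L, uniq L /\ all (sigma2_index n) L &
    (\sum_(t \in X) (sigma2_term w n m t)%:E
     <= (\sum_(a <- L) r (m + a)
           * iter p (rkerw w L (inv_nD R n)) (rker w L (inv_n2B R n)) a)%:E)%E.
Proof.
case=> finX Xidx; set ts := fset_set X.
set L := [seq j <- undup (flatten (map val ts)) | sigma2_index n j].
exists L; first by rewrite filter_uniq ?undup_uniq // filter_all.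
pose G l := r (m + head 0 l) * walk w (inv_nD R n) (inv_n2B R n) (head 0 l) (behead l).
have -> : \sum_(a <- L) r (m + a)
           * iter p (rkerw w L (inv_nD R n)) (rker w L (inv_n2B R n)) a
         = \sum_(l <- tuples p.+2 L) G l.
  rewrite tuplesS big_allpairs_dep; apply: eq_bigr => a _.
  by rewrite -sum_walk mulr_sumr.
rewrite fsbig_finite // sumEFin lee_fin.
under eq_bigr do rewrite sigma2_termE -/(G _).
rewrite -(big_map val xpredT G); apply: uniq_sub_ler_sum => [||l].
- by rewrite map_inj_uniq ?fset_uniq //; exact: val_inj.
- move=> _ /mapP[t tts ->]; rewrite mem_tuples size_tuple eqxx /=.
  have Xt : X t by move: tts; rewrite in_fset_set // inE.
  apply/(all_nthP 0%Z) => i; rewrite size_tuple => ip.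
  have [tn [tpn tnn]] := Xidx t Xt i ip.
  change (nth 0%Z t i \in L); rewrite mem_filter mem_undup.
  apply/andP; split; first by apply/and3P; split; [exact: tn|exact/eqP|exact/eqP].
  by apply/flatten_mapP; exists t => //; rewrite mem_nth ?size_tuple.
- by rewrite mulr_ge0 ?rfun_ge0 ?walk_ge0 //; [exact: inv_nD_ge0|exact: inv_n2B_ge0].
Qed.

Lemma sigma2_le_sqsum p (B : \bar R) :
  (forall L, uniq L -> all (sigma2_index n) L ->
     ((sqsum L * \sum_(a <- L) inv_n2B R n a
         * iter p (rkerw w L (inv_nD R n)) (fun=> 1) a)%:E <= B)%E) ->
  (sigma2 w n p.+2 m <= B)%E.
Proof.
move=> QB; apply: ge_ereal_sup => _ [X HX <-].
have [L [uL idxL] XL] := sigma2_fsets_le HX.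
by apply: le_trans XL (le_trans _ (QB L uL idxL)); rewrite lee_fin sum_iter_le_sqsum.
Qed.

End Sigma2.

Theorem lemma4 (R : realType) (w : int -> R) (n : nat) (m : int)
  (hw : (l2norm2 w < +oo)%E) (hn : (0 < n)%N) (hm : coset2 n m) :
  (sigma2 w n 2 m <= l2norm2 (rfun w) * (2 * ln (6 * n%:R) / n%:R)%:E)%E /\
  (forall s : nat, (3 <= s)%N ->
     (sigma2 w n s m <= l2norm2 (rfun w) * (2 * ln (6 * n%:R) / n%:R)%:E
        * ereal_sup [set sigma1 w n (s - 2) k | k in coset2 n])%E).
Proof.
set c := 2 * ln (6 * n%:R) / n%:R.
have c_gt0 : 0 < c by rewrite divr_gt0 ?ltr0n // mulr_gt0 // ln_gt0 // -natrM ltr1n; lia.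
split.
  apply: sigma2_le_sqsum => L uL idxL /=; under eq_bigr do rewrite mulr1.
  rewrite EFinM; apply: lee_pmul; rewrite ?lee_fin ?sqsum_ge0 //.
  - by rewrite sumr_ge0 // => a _; exact: inv_n2B_ge0.
  - exact/(sqsum_le_l2norm2 w hm idxL).
  - exact: sum_inv_n2B_le.
case=> [|[|[|q]]] // _; rewrite subSS subSS subn0.
apply: sigma2_le_sqsum => L uL idxL.
rewrite EFinM -muleA; apply: lee_pmul; rewrite ?lee_fin ?sqsum_ge0 //.
- rewrite sumr_ge0 // => a _; rewrite mulr_ge0 ?inv_n2B_ge0 ?iter_rkerw_ge0 //.
  exact: inv_nD_ge0.
- exact/(sqsum_le_l2norm2 w hm idxL).
apply: sum_mul_le_sup; rewrite ?sum_inv_n2B_le ?sigma1_sup_ge0 //.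
  exact: inv_n2B_ge0.
exact: iter_rkerw1_le_sup.
Qed.
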